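(* Let $k\ge1$ and put $c_0=0$, $c_j=3^{j-1}\cdot100^{(k-1)^2}$ for $j=1,\dots,k+1$, and $c_{k+2}=100^{k^2}$; let $\xi_i=c_i-c_{i-1}-1$ for $i=1,\dots,k+2$. Let $$E=A(\xi_1)\,x_{c_0}\,A(\xi_2)\,x_{c_1}\,A(\xi_3)\,x_{c_2}\cdots x_{c_k}\,A(\xi_{k+2}),$$ and for a permutation $\sigma$ of $\{c_0,\dots,c_k\}$ let $E^\sigma=A(\xi_1)x_{\sigma(c_0)}A(\xi_2)x_{\sigma(c_1)}\cdots x_{\sigma(c_k)}A(\xi_{k+2})$. Let $a\in A(100^{k^2}-1)$ with $a\in B_1+\dots+B_k$, and suppose that for every permutation $\sigma$ other than the identity, no summand of $a$ lies in $E^\sigma$. Let $\bar b$ be the sum of all summands of $a$ that lie in $E$. Then $\bar b\in B_1+\dots+B_{k-1}$ (interpreted as $\{0\}$ when $k=1$).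
   Context: Let $K$ be a field and $A$ the free associative (non-unital) $K$-algebra on free generators $x_0,x_1,x_2,\dots$, with $K$-basis of monomials; $A^1$ is $A$ with unity adjoined. For $n\ge1$, $A(n)$ is the $K$-span of monomials of length $n$, and $A(0)=K$; a product of subspaces such as $E$ means the $K$-span of the corresponding products. A summand of $a\in A$ is a term $\kappa s$ ($\kappa\ne0$, $s$ a monomial) occurring in the expansion of $a$ in the monomial basis; it ''lies in'' a span of monomials if $s$ does. For a monomial $s=x_{i_1}\cdots x_{i_n}$ write $s[q]=x_{i_q}$. For $j\ge1$, $Z_j$ is the set of all elements $a\in A$ of one of the forms: (1) $a=\kappa s$, $\kappa\in K$, $s$ a monomial of length $100^{j^2}-1$ with $s[3^p\cdot100^{(j-1)^2}]=s[3^q\cdot100^{(j-1)^2}]$ for some $0\le p<q\le j$; (2) $a=\kappa(s_1+s_2)$, $\kappa\in K$, $s_1,s_2$ monomials of length $100^{j^2}-1$, with integers $0\le p<q\le j$ and $l_1>l_2\ge0$ such that $s_1$ has $x_{l_1}$ at position $3^p\cdot100^{(j-1)^2}$ and $x_{l_2}$ at position $3^q\cdot100^{(j-1)^2}$, $s_2$ has $x_{l_2}$ and $x_{l_1}$ at these positions respectively, and $s_1,s_2$ agree at all other positions. $B_j=\sum_{m\ge0}A(m\cdot100^{j^2})\,Z_j\,A^1$ (the $K$-span of products $uzv$ with $u\in A(m\cdot100^{j^2})$, $m\ge0$, $z\in Z_j$, $v\in A^1$). *)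

From Stdlib Require List.
From HB Require Import structures.
From mathcomp Require Import all_boot all_order all_algebra all_fingroup.
Set Implicit Arguments. Unset Strict Implicit. Unset Printing Implicit Defensive.
Import GRing.Theory.
Local Open Scope ring_scope.

(* Monomials x_{i1}...x_{in} of the free algebra on x_0,x_1,... are words
   [:: i1; ...; in] : seq nat (the empty word is the unit of A^1).
   An element of A^1 is represented by its coefficient function
   seq nat -> K (required to have finite support); A consists of those
   with zero coefficient at the empty word. *)
Section FreeAlg.
Variable K : fieldType.

Definition elt := seq nat -> K.

Definition fin_supp (f : elt) : Prop :=
  exists l : seq (seq nat), forall w, w \notin l -> f w = 0.

Definition mono (s : seq nat) : elt := fun w => if w == s then 1 else 0.

Definition mul (f g : elt) : elt :=
  fun w => \sum_(i < (size w).+1) f (take i w) * g (drop i w).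

(* f lies in A(n): finite span of monomials of length n (A(0) = K) *)
Definition homog (n : nat) (f : elt) : Prop :=
  fin_supp f /\ forall w, f w != 0 -> size w = n.

(* s[q], 1-indexed *)
Definition letter (s : seq nat) (q : nat) : nat := nth 0%N s q.-1.

Definition Nj (j : nat) : nat := (100 ^ (j ^ 2))%N.
Definition Mj (j : nat) : nat := (100 ^ ((j.-1) ^ 2))%N.

Definition inZ (j : nat) (z : elt) : Prop :=
  (exists (kap : K) (s : seq nat) (p q : nat),
      size s = (Nj j).-1 /\ (p < q <= j)%N /\
      letter s (3 ^ p * Mj j) = letter s (3 ^ q * Mj j) /\
      forall w, z w = kap * mono s w)
  \/
  (exists (kap : K) (s1 s2 : seq nat) (p q l1 l2 : nat),
      size s1 = (Nj j).-1 /\ size s2 = (Nj j).-1 /\ (p < q <= j)%N /\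
      (l2 < l1)%N /\
      letter s1 (3 ^ p * Mj j) = l1 /\ letter s1 (3 ^ q * Mj j) = l2 /\
      letter s2 (3 ^ p * Mj j) = l2 /\ letter s2 (3 ^ q * Mj j) = l1 /\
      (forall r, (1 <= r)%N -> r != (3 ^ p * Mj j)%N -> r != (3 ^ q * Mj j)%N ->
          letter s1 r = letter s2 r) /\
      forall w, z w = kap * (mono s1 w + mono s2 w)).

Definition in_span (P : elt -> Prop) (f : elt) : Prop :=
  exists gs : seq (K * elt), (forall g, Coq.Lists.List.In g gs -> P g.2) /\
    forall w, f w = \sum_(g <- gs) g.1 * g.2 w.

Definition Bgen (j : nat) (g : elt) : Prop :=
  exists (m : nat) (u z v : elt),
    homog (m * Nj j) u /\ inZ j z /\ fin_supp v /\
    forall w, g w = mul (mul u z) v w.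

Definition inB (j : nat) (f : elt) : Prop := in_span (Bgen j) f.

Definition inBsum (n : nat) (f : elt) : Prop :=
  exists bs : nat -> elt, (forall j, (1 <= j <= n)%N -> inB j (bs j)) /\
    forall w, f w = \sum_(1 <= j < n.+1) bs j w.

End FreeAlg.

(* Monomial s lies in A(g1) x_{l1} A(g2) x_{l2} ... x_{lr} A(glast),
   where blocks = [:: (g1,l1); ...; (gr,lr)]. *)
Fixpoint in_pat (blocks : seq (nat * nat)) (glast : nat) (s : seq nat) : bool :=
  match blocks with
  | [::] => size s == glast
  | (g, l) :: bs => [&& (g < size s)%N, nth 0%N s g == l & in_pat bs glast (drop g.+1 s)]
  end.

Definition cc (k i : nat) : nat :=
  if i == 0%N then 0%N
  else if (i <= k.+1)%N then (3 ^ i.-1 * 100 ^ ((k.-1) ^ 2))%N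
  else (100 ^ (k ^ 2))%N.

Definition xi (k i : nat) : nat := (cc k i - cc k i.-1 - 1)%N.

(* E^sigma, sigma a permutation of {c_0,...,c_k} given via indices:
   sigma(c_i) = c_(sig i). *)
Definition in_Esig (k : nat) (sig : {perm 'I_k.+1}) (s : seq nat) : bool :=
  in_pat [seq (xi k i.+1, cc k (sig (inord i))) | i <- iota 0 k.+1] (xi k k.+2) s.

(* For a permutation rho of {0..k}, relabelling the letters x_(c_i) at
   their positions in E by x_(c_rho(i)) is a linear operator on monomials
   (a composite of single-letter substitutions, [subst_letters]).  Consider the
   alternating operator
       alt(f) = sum_rho sgn(rho) * (degree N_k - 1 part of f relabelled by rho).
   (1) alt is linear and preserves each B_j with j < k: the positions of E are
       never special positions m N_j + 3^q M_j - 1 of a generator of B_j,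
       because N_j divides M_k ([E_position_not_special]); so substituting
       a letter there acts on one factor of a generator u z v and keeps the
       middle factor in Z_j ([Bgen_subst_letter]).
   (2) alt vanishes on B_k: the positions of E are exactly the special
       positions of Z_k, and the alternating sum kills Z_k ([alt_sum_Z]).
   (3) By hypothesis, alt(a) = b-bar ([alt_relabel_extracts_E]).
   Writing a = b_1 + ... + b_k therefore gives b-bar = alt(b_1) + ... +
   alt(b_(k-1)). *)

From Pilot Require Import Defs.
From HB Require Import structures.
From mathcomp Require Import all_boot all_order all_algebra all_fingroup.
From mathcomp Require Import zify.
From Stdlib Require Import FunctionalExtensionality.

Set Implicit Arguments. Unset Strict Implicit. Unset Printing Implicit Defensive.
Import GRing.Theory.

(* [lia] after turning hypotheses [b = false] (produced by [case: ifP]) into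
   [~~ b], which the zify preprocessing understands. *)
Ltac lia_bool :=
  repeat match goal with H : (_ = false) |- _ => move/negbT: H => H end; lia.

Section SetNth.
Variables (T : Type) (x0 : T).
Implicit Types (s : seq T) (b : T).

Lemma size_set_nth_lt s i b : i < size s -> size (set_nth x0 s i b) = size s.
Proof. by move=> lti; rewrite size_set_nth; lia. Qed.

Lemma nth_take_if s n r : nth x0 (take n s) r = if r < n then nth x0 s r else x0.
Proof.
case: ltnP => rn; first by rewrite nth_take.
by rewrite nth_default // size_take_min; lia.
Qed.

Lemma take_set_nth_lt s n i b : i < size s -> i < n ->
  take n (set_nth x0 s i b) = set_nth x0 (take n s) i b.
Proof.
move=> lti ltin; apply: (eq_from_nth (x0 := x0)).
  by rewrite size_take_min !size_set_nth_lt ?size_take_min //; lia.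
by move=> r _; rewrite nth_take_if !nth_set_nth /= nth_take_if; case: eqP => // ->; rewrite ltin.
Qed.

Lemma take_set_nth_ge s n i b : n <= i -> i < size s ->
  take n (set_nth x0 s i b) = take n s.
Proof.
move=> ni lti; apply: (eq_from_nth (x0 := x0)).
  by rewrite !size_take_min size_set_nth_lt.
by move=> r _; rewrite !nth_take_if nth_set_nth /=; case: ifP => // rn; case: eqP => //; lia_bool.
Qed.

Lemma drop_set_nth_ge s n i b : n <= i ->
  drop n (set_nth x0 s i b) = set_nth x0 (drop n s) (i - n) b.
Proof.
move=> ni; apply: (eq_from_nth (x0 := x0)).
  by rewrite size_drop !size_set_nth size_drop; lia.
by move=> r _; rewrite nth_drop !nth_set_nth /= nth_drop; do 2 case: eqP => //; lia.
Qed.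

Lemma drop_set_nth_lt s n i b : i < n -> i < size s ->
  drop n (set_nth x0 s i b) = drop n s.
Proof.
move=> lti ltis; apply: (eq_from_nth (x0 := x0)); first by rewrite !size_drop size_set_nth_lt.
by move=> r _; rewrite !nth_drop nth_set_nth /=; case: eqP => //; lia.
Qed.

Lemma set_nth_nth s i : i < size s -> set_nth x0 s i (nth x0 s i) = s.
Proof.
move=> lti; apply: (eq_from_nth (x0 := x0)); first by rewrite size_set_nth_lt.
by move=> r _; rewrite nth_set_nth /=; case: eqP => // ->.
Qed.

End SetNth.

(** * Arithmetic of the positions c_i and of the special positions of Z_j *)

(* 4 * 3^j is tiny compared with 100^(2j-1): the factor by which N_j
   exceeds M_j. *)
Lemma three_pow_small j : 1 <= j -> 4 * 3 ^ j <= 100 ^ (2 * j - 1).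
Proof.
elim: j => // j IH _; case: j IH => [|j] IH //.
have -> : 2 * j.+2 - 1 = (2 * j.+1 - 1).+2 by lia.
rewrite (expnS 3 j.+1) (expnS 100 (2 * j.+1 - 1).+1) (expnS 100 (2 * j.+1 - 1)).
have := IH isT; nia.
Qed.

Lemma Mj_gt0 j : 0 < Mj j. Proof. by rewrite /Mj expn_gt0. Qed.
Lemma Nj_gt0 j : 0 < Nj j. Proof. by rewrite /Nj expn_gt0. Qed.

Lemma NjE j : 1 <= j -> Nj j = Mj j * 100 ^ (2 * j - 1).
Proof.
move=> j_gt0; rewrite /Nj /Mj -expnD; congr (_ ^ _).
by rewrite -!mulnn; case: j j_gt0 => // j _ /=; nia.
Qed.

Lemma special_gt0 j q : 0 < 3 ^ q * Mj j.
Proof. by rewrite muln_gt0 expn_gt0 Mj_gt0. Qed.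

Lemma special_lt j q : 1 <= j -> q <= j -> 3 ^ q * Mj j < Nj j.
Proof.
move=> j_gt0 qj; rewrite NjE //.
have := three_pow_small j_gt0; have : 3 ^ q <= 3 ^ j by rewrite leq_exp2l.
have := Mj_gt0 j; nia.
Qed.

Lemma special_top j : 1 <= j -> 3 ^ j * Mj j + 2 <= Nj j.
Proof.
move=> j_gt0; rewrite NjE //; have := three_pow_small j_gt0.
have := Mj_gt0 j; have : 0 < 3 ^ j by rewrite expn_gt0.
nia.
Qed.

(* For 1 <= i <= k+1, c_i = 3^(i-1) M_k is the (i-1)-th special position
   of Z_k, and c_(k+2) = N_k. *)
Lemma ccS k i : i <= k -> cc k i.+1 = 3 ^ i * Mj k.
Proof. by move=> ik; rewrite /cc /= ltnS ik. Qed.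

Lemma cc_last k : cc k k.+2 = Nj k.
Proof. by rewrite /cc /= ltnn. Qed.

Lemma cc_lt k i : i <= k -> cc k i < cc k i.+1.
Proof.
move=> ik; rewrite ccS //; case: i ik => [|i] ik; first by rewrite mul1n Mj_gt0.
rewrite ccS; last lia.
rewrite expnS; have := Mj_gt0 k; have : 0 < 3 ^ i by rewrite expn_gt0.
nia.
Qed.

Lemma cc_le k i : i <= k -> cc k i.+1 <= 3 ^ k * Mj k.
Proof. by move=> ik; rewrite ccS // leq_mul2r leq_exp2l // ik orbT. Qed.

Lemma cc_inj k i j : i <= k -> j <= k -> cc k i = cc k j -> i = j.
Proof.
case: i => [|i]; case: j => [|j] ik jk //.
- by rewrite ccS; [have := special_gt0 k j; rewrite /cc /=; lia | lia].
- by rewrite ccS; [have := special_gt0 k i; rewrite /cc /=; lia | lia].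
rewrite !ccS; try lia.
by move/eqP; rewrite eqn_pmul2r ?Mj_gt0 // eqn_exp2l // => /eqP ->.
Qed.

(* The key arithmetic fact: for j < k, a letter position c_(i+1) - 1 of E
   (0-indexed) never lies on a special position of a generator of B_j,
   i.e. at an offset m N_j + 3^q M_j - 1.  Indeed N_j divides M_k, so such
   a coincidence would give 3^q M_j = 0 mod N_j. *)
Lemma E_position_not_special k j i m q : 1 <= j -> j < k -> i <= k -> q <= j ->
  (cc k i.+1).-1 != m * Nj j + (3 ^ q * Mj j).-1.
Proof.
move=> j_gt0 jk ik qj; apply/eqP => eq_pos.
have := special_gt0 k i; have := special_gt0 j q; rewrite ccS // in eq_pos.
move=> p1 p2; have eq_pos' : 3 ^ i * Mj k = m * Nj j + 3 ^ q * Mj j by lia.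
have Nj_dvd : Nj j %| Mj k.
  rewrite /Nj /Mj dvdn_exp2l // -!mulnn; have j_le : j <= k.-1 by lia.
  exact: (leq_mul j_le j_le).
have : (3 ^ i * Mj k) %% Nj j = 0 by apply/eqP; rewrite -/(dvdn _ _) dvdn_mull.
by rewrite eq_pos' modnMDl modn_small ?special_lt //; lia.
Qed.

Section Products.
Variable K : fieldType.
Local Open Scope ring_scope.
Local Notation elt := (elt K).

Lemma sum_ord_single (S n : nat) (F : nat -> K) :
  (forall i, (i < S)%N -> i != n -> F i = 0) ->
  \sum_(i < S) F i = if (n < S)%N then F n else 0.
Proof.
move=> F0; case: ltnP => nS.
  rewrite (bigD1 (Ordinal nS)) //= big1 => [|i ne_i]; first by rewrite addr0.
  by apply: F0 => //; apply: contraNneq ne_i => eq_i; apply/eqP/val_inj.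
rewrite big1 // => i _; apply: F0 => //; apply/eqP => eq_i.
by move: (ltn_ord i); rewrite eq_i ltnNge nS.
Qed.

Lemma mul_homogE (u z : elt) n nz : homog n u ->
  (forall w, z w != 0 -> size w = nz) ->
  forall w, Defs.mul u z w = if size w == (n + nz)%N then u (take n w) * z (drop n w) else 0.
Proof.
move=> [_ u_deg] z_deg w; rewrite /Defs.mul (@sum_ord_single _ n (fun i => u (take i w) * z (drop i w))).
  case: ifP => sz; case: ifP => nw //; last by lia_bool.
  case: (z (drop n w) =P 0) => [->|/eqP zw]; first by rewrite mulr0.
  by have := z_deg _ zw; rewrite size_drop; lia_bool.
move=> i i_le i_n; case: (u (take i w) =P 0) => [->|/eqP uw]; first by rewrite mul0r.
by have := u_deg _ uw; rewrite size_take_min; lia.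
Qed.

Lemma mul3_homogE (u z v : elt) n nz : homog n u ->
  (forall w, z w != 0 -> size w = nz) ->
  forall w, Defs.mul (Defs.mul u z) v w = if (n + nz <= size w)%N then
     u (take n w) * z (take nz (drop n w)) * v (drop (n + nz) w) else 0.
Proof.
move=> u_deg z_deg w.
rewrite {1}/Defs.mul (@sum_ord_single _ (n + nz) (fun i => Defs.mul u z (take i w) * v (drop i w))).
  rewrite ltnS; case: ifP => // nzw.
  rewrite (mul_homogE u_deg z_deg) size_take_min (_ : minn _ _ = n + nz)%N; last lia.
  by rewrite eqxx take_takel ?leq_addr // take_drop addnC.
move=> i i_le i_nz; rewrite (mul_homogE u_deg z_deg) size_take_min.
by case: ifP => [? | _]; [lia_bool | rewrite mul0r].
Qed.

End Products.

Section Spans.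
Variable K : fieldType.
Local Open Scope ring_scope.
Local Notation elt := (elt K).
Implicit Types (P : elt -> Prop) (f g : elt).

Lemma span_ext P f f' : in_span P f -> (forall w, f w = f' w) -> in_span P f'.
Proof. by move=> [gs [gsP fE]] ff'; exists gs; split => // w; rewrite -ff'. Qed.

Lemma span_gen P g : P g -> in_span P g.
Proof.
move=> Pg; exists [:: (1, g)]; split; first by move=> x [<-|[]].
by move=> w; rewrite big_cons big_nil addr0 mul1r.
Qed.

Lemma span_sum P (X : Type) (r : seq X) (c : X -> K) (F : X -> elt) :
  (forall x, List.In x r -> in_span P (F x)) ->
  in_span P (fun w => \sum_(x <- r) c x * F x w).
Proof.
elim: r => [|x r IH] FP.
  by exists [::]; split => // w; rewrite !big_nil.
have [gs1 [gs1P FxE]] := FP x (or_introl erefl).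
have [gs2 [gs2P restE]] := IH (fun y ry => FP y (or_intror ry)).
exists (map (fun gc => (c x * gc.1, gc.2)) gs1 ++ gs2); split.
  move=> gc /(List.in_app_or _ _ _) [/(List.in_map_iff _ _ _) [hc [<- gs1_hc]]|gs2_gc].
    exact: (gs1P _ gs1_hc).
  exact: (gs2P _ gs2_gc).
move=> w; rewrite big_cat big_map big_cons FxE restE big_distrr /=.
by congr (_ + _); apply: eq_bigr => gc _; rewrite mulrA.
Qed.

Definition linear_op (T : elt -> elt) :=
  forall (X : Type) (r : seq X) (c : X -> K) (F : X -> elt) w,
    T (fun w => \sum_(x <- r) c x * F x w) w = \sum_(x <- r) c x * T (F x) w.

Lemma linear_op_comp T1 T2 : linear_op T1 -> linear_op T2 -> linear_op (fun f => T1 (T2 f)).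
Proof.
move=> lin1 lin2 X r c F w /=.
have -> : T2 (fun w => \sum_(x <- r) c x * F x w) = fun w => \sum_(x <- r) c x * T2 (F x) w.
  by apply: functional_extensionality => y; apply: lin2.
exact: lin1.
Qed.

Lemma span_linear_op P T f : linear_op T -> (forall g, P g -> in_span P (T g)) ->
  in_span P f -> in_span P (T f).
Proof.
move=> linT TP [gs [gsP fE]].
have -> : f = fun w => \sum_(gc <- gs) gc.1 * gc.2 w by apply: functional_extensionality.
apply: span_ext (span_sum (F := fun gc => T gc.2) (fun gc => gc.1) _) _.
  by move=> gc gs_gc; apply: TP; apply: (gsP _ gs_gc).
by move=> w; rewrite linT.
Qed.

Lemma span_linear_op0 P T f : linear_op T -> (forall g, P g -> forall w, T g w = 0) ->
  in_span P f -> forall w, T f w = 0.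
Proof.
move=> linT T0 [gs [gsP fE]] w.
have -> : f = fun w => \sum_(gc <- gs) gc.1 * gc.2 w by apply: functional_extensionality.
rewrite linT; elim: gs gsP {fE} => [|gc gs IH] gsP; first by rewrite big_nil.
rewrite big_cons T0 ?mulr0 ?add0r; last by apply: gsP; left.
by apply: IH => gc' gs_gc'; apply: gsP; right.
Qed.

End Spans.

(** * Substituting one letter at a fixed position *)

Section SubstLetter.
Variable K : fieldType.
Local Open Scope ring_scope.
Local Notation elt := (elt K).

(* [subst_letter i a b] is the linear map sending a monomial whose letter at
   (0-indexed) position i is x_b to the same monomial with x_a there, and
   every other monomial to 0 (see [subst_letter_mono]). *)
Definition subst_letter (i a b : nat) (f : elt) : elt :=
  fun w => if (i < size w)%N && (nth 0%N w i == a) then f (set_nth 0%N w i b) else 0.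

Lemma subst_letter_fin i a b f : fin_supp f -> fin_supp (subst_letter i a b f).
Proof.
move=> [l fl]; exists (map (fun x => set_nth 0%N x i a) l) => w w_l.
rewrite /subst_letter; case: ifP => // /andP [lti /eqP wi]; apply: fl; apply: contra w_l => l_w.
apply/mapP; exists (set_nth 0%N w i b) => //.
by rewrite set_set_nth eqxx -wi set_nth_nth.
Qed.

Lemma subst_letter_homog n i a b f : homog n f -> homog n (subst_letter i a b f).
Proof.
move=> [f_fin f_deg]; split; first exact: subst_letter_fin.
move=> w; rewrite /subst_letter; case: ifP => [/andP [lti _] fw|]; last by rewrite eqxx.
by rewrite -(size_set_nth_lt 0%N b lti); apply: f_deg.
Qed.

Lemma subst_letter_mono i a b s w : subst_letter i a b (mono K s) w =
  if (i < size s)%N && (nth 0%N s i == b) then mono K (set_nth 0%N s i a) w else 0.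
Proof.
rewrite /subst_letter /mono.
case: (boolP ((i < size w)%N && (nth 0%N w i == a))) => [/andP [lti /eqP wi]|wN].
  case: (set_nth 0%N w i b =P s) => [<-|ne_s].
    by rewrite size_set_nth_lt // lti nth_set_nth /= !eqxx set_set_nth eqxx -wi set_nth_nth // eqxx.
  case: ifP => // /andP [ltis /eqP si]; case: eqP => // w_s; case: ne_s.
  by rewrite w_s set_set_nth eqxx -si set_nth_nth.
case: ifP => // /andP [ltis /eqP si]; case: eqP => // w_s; case/negP: wN.
by rewrite w_s size_set_nth_lt // ltis nth_set_nth /= !eqxx.
Qed.

Lemma subst_letter_linear i a b : linear_op (subst_letter i a b).
Proof.
move=> X r c F w; rewrite /subst_letter; case: ifP => // _.
by rewrite big1 // => x _; rewrite mulr0.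
Qed.

Definition deg_part (n : nat) (f : elt) : elt := fun w => if size w == n then f w else 0.

Lemma deg_part_linear n : linear_op (deg_part n).
Proof.
move=> X r c F w; rewrite /deg_part; case: ifP => // _.
by rewrite big1 // => x _; rewrite mulr0.
Qed.

Lemma inZ_size j (z : elt) w : inZ j z -> z w != 0 -> size w = (Nj j).-1.
Proof.
case=> [[kap [s [p [q [s_size [_ [_ zE]]]]]]]|
        [kap [s1 [s2 [p [q [l1 [l2 [s1_size [s2_size [_ [_ [_ [_ [_ [_ [_ zE]]]]]]]]]]]]]]]]];
  rewrite zE /mono.
- by case: (w =P s) => [-> //|_]; rewrite mulr0 eqxx.
- case: (w =P s1) => [-> //|_]; case: (w =P s2) => [-> //|_].
  by rewrite addr0 mulr0 eqxx.
Qed.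

Lemma subst_letter_Z j (z : elt) i a b : inZ j z -> (i < (Nj j).-1)%N ->
  (forall q, (q <= j)%N -> i != (3 ^ q * Mj j).-1) -> inZ j (subst_letter i a b z).
Proof.
move=> zZ i_lt i_off.
have letter_set q : (q <= j)%N -> forall s,
    letter (set_nth 0%N s i a) (3 ^ q * Mj j) = letter s (3 ^ q * Mj j).
  by move=> qj s; rewrite /letter nth_set_nth /=; case: eqP => // e; case/eqP: (i_off q qj).
case: zZ => [[kap [s [p [q [s_size [pqj [s_pq zE]]]]]]]|
    [kap [s1 [s2 [p [q [l1 [l2 [s1_size [s2_size [pqj [l21 [s1p [s1q [s2p [s2q [s12 zE]]]]]]]]]]]]]]]]].
- left; have substE w : subst_letter i a b z w = kap * subst_letter i a b (mono K s) w.
    by rewrite /subst_letter; case: ifP => _; rewrite ?zE ?mulr0.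
  have [/andP [lt_is s_i]|s_iN] := boolP ((i < size s)%N && (nth 0%N s i == b)).
    exists kap, (set_nth 0%N s i a), p, q; rewrite size_set_nth_lt // s_size.
    rewrite !letter_set; try lia.
    do 3 split => //; move=> w.
    by rewrite substE subst_letter_mono lt_is s_i.
  exists 0, s, p, q; do 3 split => //; move=> w.
  by rewrite substE subst_letter_mono (negbTE s_iN) mulr0 mul0r.
- right; have substE w : subst_letter i a b z w =
      kap * (subst_letter i a b (mono K s1) w + subst_letter i a b (mono K s2) w).
    by rewrite /subst_letter; case: ifP => _; rewrite ?zE ?addr0 ?mulr0.
  have s12_i : nth 0%N s1 i = nth 0%N s2 i.
    have := s12 i.+1 isT; rewrite /letter /=; apply.
      by apply/eqP => e; move: (i_off p); rewrite -e /=; lia.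
    by apply/eqP => e; move: (i_off q); rewrite -e /=; lia.
  have [s1_i|s1_iN] := boolP (nth 0%N s1 i == b).
    exists kap, (set_nth 0%N s1 i a), (set_nth 0%N s2 i a), p, q, l1, l2.
    rewrite !size_set_nth_lt ?s1_size ?s2_size // !letter_set; try lia.
    do 8 split => //; split.
      by move=> r r1 rp rq; rewrite /letter !nth_set_nth /=; case: eqP => // _; apply: s12.
    by move=> w; rewrite substE !subst_letter_mono s1_size s2_size i_lt -s12_i s1_i.
  exists 0, s1, s2, p, q, l1, l2; do 9 split => //; move=> w.
  by rewrite substE !subst_letter_mono -s12_i (negbTE s1_iN) !andbF addr0 mulr0 mul0r.
Qed.

Section SubstProduct.
Variables (u z v : elt) (n nz : nat).
Hypotheses (u_deg : homog n u) (z_deg : forall w, z w != 0 -> size w = nz).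

Lemma subst_letter_mul3 i a b w :
  subst_letter i a b (Defs.mul (Defs.mul u z) v) w =
  if (i < size w)%N && (nth 0%N w i == a) && (n + nz <= size w)%N then
    let w' := set_nth 0%N w i b in u (take n w') * z (take nz (drop n w')) * v (drop (n + nz) w')
  else 0.
Proof.
rewrite /subst_letter; case: ifP => //= /andP [lti _].
by rewrite (mul3_homogE _ u_deg z_deg) size_set_nth_lt.
Qed.

Lemma subst_letter_mul3_left i a b w : (i < n)%N ->
  subst_letter i a b (Defs.mul (Defs.mul u z) v) w =
  Defs.mul (Defs.mul (subst_letter i a b u) z) v w.
Proof.
move=> i_n; rewrite subst_letter_mul3 (mul3_homogE _ (subst_letter_homog i a b u_deg) z_deg).
case: (leqP (n + nz) (size w)) => nz_w; last by rewrite andbF.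
rewrite andbT /subst_letter size_take_min nth_take_if i_n.
rewrite (_ : (i < minn n (size w))%N = (i < size w)%N); last by apply/idP/idP; lia.
case: ifP => [/andP [lti _]|_]; last by rewrite !mul0r.
by rewrite /= take_set_nth_lt // !drop_set_nth_lt //; lia.
Qed.

Lemma subst_letter_mul3_mid i a b w : (n <= i < n + nz)%N ->
  subst_letter i a b (Defs.mul (Defs.mul u z) v) w =
  Defs.mul (Defs.mul u (subst_letter (i - n) a b z)) v w.
Proof.
move=> /andP [n_i i_nz].
have z'_deg w' : subst_letter (i - n) a b z w' != 0 -> size w' = nz.
  rewrite /subst_letter; case: ifP => [/andP [lti _] /z_deg|]; last by rewrite eqxx.
  by rewrite size_set_nth_lt.
rewrite subst_letter_mul3 (mul3_homogE _ u_deg z'_deg).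
case: (leqP (n + nz) (size w)) => nz_w; last by rewrite andbF.
rewrite andbT /subst_letter size_take_min size_drop nth_take_if nth_drop subnKC //.
rewrite (_ : (i - n < nz)%N = true); last by apply/idP; lia.
rewrite (_ : (i - n < minn nz (size w - n))%N = (i < size w)%N); last by apply/idP/idP; lia.
case: ifP => [/andP [lti _]|_]; last by rewrite mulr0 mul0r.
rewrite /= take_set_nth_ge // drop_set_nth_ge // take_set_nth_lt ?size_drop; try lia.
by rewrite drop_set_nth_lt //; lia.
Qed.

Lemma subst_letter_mul3_right i a b w : (n + nz <= i)%N ->
  subst_letter i a b (Defs.mul (Defs.mul u z) v) w =
  Defs.mul (Defs.mul u z) (subst_letter (i - (n + nz)) a b v) w.
Proof.
move=> nz_i; have n_i : (n <= i)%N by lia.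
rewrite subst_letter_mul3 (mul3_homogE _ u_deg z_deg).
case: (leqP (n + nz) (size w)) => nz_w; last by rewrite andbF.
rewrite andbT /subst_letter size_drop nth_drop subnKC //.
rewrite (_ : (i - (n + nz) < size w - (n + nz))%N = (i < size w)%N); last by apply/idP/idP; lia.
case: ifP => [/andP [lti _]|_]; last by rewrite mulr0.
rewrite /= (take_set_nth_ge _ _ _ (n := n)); try lia.
rewrite [drop (n + nz) _]drop_set_nth_ge // drop_set_nth_ge //.
by rewrite (take_set_nth_ge _ _ _ (n := nz)) ?size_drop //; lia.
Qed.

End SubstProduct.

Lemma Bgen_subst_letter j (g : elt) i a b :
  (forall m q, (q <= j)%N -> i != (m * Nj j + (3 ^ q * Mj j).-1)%N) ->
  Bgen j g -> Bgen j (subst_letter i a b g).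
Proof.
move=> i_off [m [u [z [v [u_deg [zZ [v_fin gE]]]]]]].
have z_deg w : z w != 0 -> size w = (Nj j).-1 := inZ_size zZ.
have -> : g = Defs.mul (Defs.mul u z) v by apply: functional_extensionality.
case: (ltnP i (m * Nj j)) => [i_u|u_i].
  exists m, (subst_letter i a b u), z, v; split; first exact: subst_letter_homog.
  by split=> //; split=> // w; apply: (subst_letter_mul3_left _ u_deg z_deg).
case: (ltnP i (m * Nj j + (Nj j).-1)) => [i_z|z_i].
  exists m, u, (subst_letter (i - m * Nj j) a b z), v; split=> //; split.
    apply: subst_letter_Z => //; first by lia.
    by move=> q qj; apply/eqP => e; case/eqP: (i_off m q qj); lia.
  by split=> // w; apply: (subst_letter_mul3_mid _ u_deg z_deg); rewrite u_i.
exists m, u, z, (subst_letter (i - (m * Nj j + (Nj j).-1)) a b v); split=> //; split=> //.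
by split; [exact: subst_letter_fin | move=> w; exact: (subst_letter_mul3_right _ u_deg z_deg)].
Qed.

(* The degree-n part of a generator of B_j is again a generator: only the
   right factor v needs to be truncated. *)
Lemma Bgen_deg_part j (g : elt) n : Bgen j g -> Bgen j (deg_part n g).
Proof.
move=> [m [u [z [v [u_deg [zZ [[l v_l] gE]]]]]]].
have z_deg w : z w != 0 -> size w = (Nj j).-1 := inZ_size zZ.
exists m, u, z, (fun y => if (size y + (m * Nj j + (Nj j).-1))%N == n then v y else 0).
split=> //; split=> //; split; first by exists l => w w_l; case: ifP => // _; exact: v_l.
move=> w; rewrite /deg_part gE !(mul3_homogE _ u_deg z_deg).
case: (leqP (m * Nj j + (Nj j).-1) (size w)) => nz_w; last by case: ifP.
by rewrite size_drop subnK //; case: ifP => _ //; rewrite mulr0.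
Qed.

End SubstLetter.

(* 0-indexed position of the letter x_(c_i) in the pattern E. *)
Definition Epos (k : nat) (i : 'I_k.+1) : nat := (cc k i.+1).-1.

Lemma in_pat_suffix k (sig : {perm 'I_k.+1}) : 1 <= k -> forall d t w, t + d = k.+1 ->
  in_pat [seq (xi k i.+1, cc k (sig (inord i))) | i <- iota t d] (xi k k.+2) (drop (cc k t) w) =
  (size w == (Nj k).-1) &&
    all (fun i => nth 0 w (cc k i.+1).-1 == cc k (sig (inord i))) (iota t d).
Proof.
move=> k_gt0; have top := special_top k_gt0.
elim=> [|d IH] t w td.
  rewrite addn0 in td; subst t => /=.
  rewrite andbT /xi /= cc_last size_drop ccS //.
  by apply/eqP/eqP; lia.
have tk : t <= k by lia.
have := cc_lt tk; have := cc_le tk; rewrite /= drop_drop nth_drop => c_le c_lt.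
rewrite (_ : (xi k t.+1).+1 + cc k t = cc k t.+1); last by rewrite /xi /=; lia.
rewrite (_ : cc k t + xi k t.+1 = (cc k t.+1).-1); last by rewrite /xi /=; lia.
rewrite IH; last lia.
case: (size w =P (Nj k).-1) => w_size /=; last by rewrite !andbF.
rewrite size_drop w_size (_ : xi k t.+1 < (Nj k).-1 - cc k t = true) //.
by apply/idP; rewrite /xi /=; lia.
Qed.

Lemma in_EsigE k (sig : {perm 'I_k.+1}) s : 1 <= k ->
  in_Esig sig s = (size s == (Nj k).-1) &&
     all (fun i : 'I_k.+1 => nth 0 s (Epos i) == cc k (sig i)) (enum 'I_k.+1).
Proof.
move=> k_gt0; have := in_pat_suffix sig k_gt0 s (add0n k.+1).
rewrite [cc k 0]/= drop0 /in_Esig => ->.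
rewrite -val_enum_ord all_map; congr andb; apply: eq_all => i /=.
by rewrite inord_val.
Qed.

(* A substitution list L consists of triples ((i, a), b): at position i the
   letter a of the argument is replaced by b. *)
Fixpoint set_nths (L : seq (nat * nat * nat)) (w : seq nat) : seq nat :=
  if L is x :: L' then set_nths L' (set_nth 0 w x.1.1 x.2) else w.

Definition nths_match (L : seq (nat * nat * nat)) (w : seq nat) : bool :=
  all (fun x : nat * nat * nat => (x.1.1 < size w) && (nth 0 w x.1.1 == x.1.2)) L.

Lemma size_set_nths L w : all (fun x : nat * nat * nat => x.1.1 < size w) L ->
  size (set_nths L w) = size w.
Proof.
elim: L w => [|x L IH] w //= /andP [x_lt L_lt].
by rewrite IH size_set_nth_lt.
Qed.

Lemma nth_set_nths_out L w r : r \notin [seq x.1.1 | x <- L] ->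
  nth 0 (set_nths L w) r = nth 0 w r.
Proof.
elim: L w => [|x L IH] w //=; rewrite inE negb_or => /andP [r_x r_L].
by rewrite IH // nth_set_nth /= (negbTE r_x).
Qed.

Lemma nth_set_nths_in L w x : uniq [seq y.1.1 | y <- L] -> x \in L ->
  nth 0 (set_nths L w) x.1.1 = x.2.
Proof.
elim: L w => [|y L IH] w //= /andP [y_L L_uniq]; rewrite inE => /orP [/eqP ->|x_L].
  by rewrite nth_set_nths_out // nth_set_nth /= eqxx.
exact: IH.
Qed.

Section SubstLetters.
Variable K : fieldType.
Local Open Scope ring_scope.
Local Notation elt := (elt K).

Definition subst_letters (L : seq (nat * nat * nat)) (f : elt) : elt :=
  foldr (fun x g => subst_letter x.1.1 x.1.2 x.2 g) f L.

Lemma subst_lettersE L (f : elt) w : uniq [seq x.1.1 | x <- L] ->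
  subst_letters L f w = if nths_match L w then f (set_nths L w) else 0.
Proof.
elim: L w => [|x L IH] w //= /andP [x_L L_uniq].
rewrite {1}/subst_letter; case: ifP => //= /andP [x_lt x_nth]; rewrite IH //.
rewrite (_ : nths_match L (set_nth 0 w x.1.1 x.2) = nths_match L w) //.
apply: eq_in_all => y y_L /=; rewrite size_set_nth_lt // nth_set_nth /=.
case: (y.1.1 =P x.1.1) => // e; case/negP: x_L; rewrite -e; exact: map_f.
Qed.

Lemma subst_letters_linear L : linear_op (subst_letters L).
Proof.
elim: L => [|x L IH] //=.
exact: (linear_op_comp (subst_letter_linear x.1.1 x.1.2 x.2) IH).
Qed.

Lemma Bgen_subst_letters j L (g : elt) :
  (forall x, x \in L -> forall m q, (q <= j)%N -> x.1.1 != (m * Nj j + (3 ^ q * Mj j).-1)%N) ->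
  Bgen j g -> Bgen j (subst_letters L g).
Proof.
elim: L => [|x L IH] //= L_off g_gen; apply: Bgen_subst_letter; first by apply: L_off; rewrite inE eqxx.
by apply: IH => // y y_L; apply: L_off; rewrite inE y_L orbT.
Qed.

End SubstLetters.

(** * Relabelling the letters of E by a permutation *)

Section Relabel.
Variable k : nat.
Implicit Types (rho : {perm 'I_k.+1}) (i : 'I_k.+1).

Definition relabel_list rho : seq (nat * nat * nat) :=
  [seq (Epos i, cc k i, cc k (rho i)) | i <- enum 'I_k.+1].

Definition relabel rho (w : seq nat) : seq nat := set_nths (relabel_list rho) w.

Lemma EposE i : Epos i = (3 ^ i * Mj k).-1.
Proof. by rewrite /Epos ccS // -ltnS. Qed.

Lemma Epos_inj : injective (@Epos k).
Proof.
move=> i j; rewrite !EposE => e.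
have := special_gt0 k i; have := special_gt0 k j => ? ?.
have /eqP : 3 ^ i * Mj k = 3 ^ j * Mj k by lia.
by rewrite eqn_pmul2r ?Mj_gt0 // eqn_exp2l // => /eqP/val_inj.
Qed.

Lemma relabel_list_positions rho :
  [seq x.1.1 | x <- relabel_list rho] = [seq Epos i | i <- enum 'I_k.+1].
Proof. by rewrite -map_comp. Qed.

Lemma relabel_list_uniq rho : uniq [seq x.1.1 | x <- relabel_list rho].
Proof. by rewrite relabel_list_positions map_inj_uniq ?enum_uniq //; exact: Epos_inj. Qed.

Lemma nths_match_relabel rho w : nths_match (relabel_list rho) w = nths_match (relabel_list 1) w.
Proof. by rewrite /nths_match !all_map; apply: eq_all. Qed.

Lemma relabel_Epos rho w i : nth 0 (relabel rho w) (Epos i) = cc k (rho i).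
Proof.
exact: (nth_set_nths_in w (relabel_list_uniq rho) (map_f _ (mem_enum _ i))).
Qed.

Lemma Epos_dec r : (exists i, r = Epos i) \/ (forall i, r != Epos i).
Proof.
case: (boolP [exists i : 'I_k.+1, r == Epos i]) => [/existsP [i /eqP e]|/existsPn r_off].
  by left; exists i.
by right.
Qed.

Lemma relabel_out rho w r : (forall i, r != Epos i) -> nth 0 (relabel rho w) r = nth 0 w r.
Proof.
move=> r_off; apply: nth_set_nths_out; rewrite relabel_list_positions.
by apply/mapP => [[i _ e]]; case/eqP: (r_off i).
Qed.

Hypothesis k_gt0 : 1 <= k.

Lemma Epos_lt i : Epos i < (Nj k).-1.
Proof.
have := special_top k_gt0; have := special_gt0 k i.
have : 3 ^ i * Mj k <= 3 ^ k * Mj k by rewrite leq_mul2r leq_exp2l // -ltnS ltn_ord orbT.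
by rewrite EposE; lia.
Qed.

Lemma relabel_size rho w : size w = (Nj k).-1 -> size (relabel rho w) = size w.
Proof.
move=> w_size; apply: size_set_nths; rewrite all_map; apply/allP => i _ /=.
by rewrite w_size Epos_lt.
Qed.

(* Composing rho with the transposition (p q) swaps the letters at the
   positions of x_(c_p) and x_(c_q), i.e. turns s1 into s2 in a generator of
   the second kind of Z_k. *)
Lemma relabel_tperm (p q : 'I_k.+1) rho w s1 s2 : p != q -> size w = (Nj k).-1 ->
  size s1 = size s2 ->
  nth 0 s1 (Epos p) = nth 0 s2 (Epos q) -> nth 0 s1 (Epos q) = nth 0 s2 (Epos p) ->
  (forall r, r != Epos p -> r != Epos q -> nth 0 s1 r = nth 0 s2 r) ->
  relabel rho w = s1 -> relabel (tperm p q * rho) w = s2.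
Proof.
move=> pq w_size s12_size s12_p s12_q s12_off relabel_s1; subst s1.
apply: (eq_from_nth (x0 := 0)); first by rewrite -s12_size !relabel_size.
move=> r _; case: (Epos_dec r) => [[i ->]|r_off].
- rewrite relabel_Epos permM.
  case: (i =P p) => [->|ip]; first by rewrite tpermL -s12_q relabel_Epos.
  case: (i =P q) => [->|iq]; first by rewrite tpermR -s12_p relabel_Epos.
  rewrite tpermD; try by apply/eqP => e; subst.
  rewrite -(relabel_Epos rho w) s12_off //; apply/eqP => /Epos_inj e; subst; by [apply: ip | apply: iq].
- by rewrite -s12_off ?relabel_out.
Qed.

Lemma in_E_match w : size w = (Nj k).-1 -> in_Esig (1%g : {perm 'I_k.+1}) w = nths_match (relabel_list 1) w.
Proof.
move=> w_size; rewrite in_EsigE // w_size eqxx /= /nths_match /relabel_list all_map.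
by apply: eq_all => i /=; rewrite perm1 w_size Epos_lt.
Qed.

Lemma relabel_id w : size w = (Nj k).-1 -> nths_match (relabel_list 1) w -> relabel 1 w = w.
Proof.
move=> w_size /allP w_match; apply: (eq_from_nth (x0 := 0)); first by rewrite relabel_size.
move=> r _; case: (Epos_dec r) => [[i ->]|r_off]; last by rewrite relabel_out.
have := w_match _ (map_f _ (mem_enum _ i)); rewrite /= => /andP [_ /eqP ->].
by rewrite relabel_Epos perm1.
Qed.

Lemma relabel_in_Esig rho w : size w = (Nj k).-1 -> in_Esig rho (relabel rho w).
Proof.
move=> w_size; rewrite in_EsigE // relabel_size // w_size eqxx /=.
by apply/allP => i _; rewrite relabel_Epos.
Qed.

End Relabel.

(** * The alternating relabelling operator *)

Section AltRelabel.
Variable K : fieldType.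
Variable k : nat.
Hypothesis k_gt0 : (1 <= k)%N.
Local Open Scope ring_scope.
Local Notation elt := (elt K).
Local Notation perm := {perm 'I_k.+1}.
Implicit Types rho : perm.

Definition sgn (rho : perm) : K := (-1) ^+ odd_perm rho.

Lemma sgn_tperm (p q : 'I_k.+1) rho : p != q -> sgn (tperm p q * rho) = - sgn rho.
Proof. by move=> pq; rewrite /sgn odd_permM odd_tperm pq signr_addb expr1 mulN1r. Qed.

Definition alt_relabel (f : elt) : elt := fun w =>
  \sum_(rho : perm) sgn rho * deg_part (Nj k).-1 (subst_letters (relabel_list rho) f) w.

Lemma alt_relabelE f w : alt_relabel f w =
  if in_Esig (1%g : perm) w then \sum_(rho : perm) sgn rho * f (relabel rho w) else 0.
Proof.
rewrite /alt_relabel; case: (size w =P (Nj k).-1) => w_size; last first.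
  rewrite in_EsigE // (introF eqP w_size) big1 // => rho _.
  by rewrite /deg_part (introF eqP w_size) mulr0.
rewrite in_E_match //; case: ifP => w_match.
  apply: eq_bigr => rho _.
  by rewrite /deg_part w_size eqxx subst_lettersE ?relabel_list_uniq // nths_match_relabel w_match.
rewrite big1 // => rho _.
by rewrite /deg_part w_size eqxx subst_lettersE ?relabel_list_uniq // nths_match_relabel w_match mulr0.
Qed.

Lemma alt_relabel_linear : linear_op alt_relabel.
Proof.
move=> X r c F w; rewrite /alt_relabel.
have lin rho : linear_op (fun f : elt => deg_part (Nj k).-1 (subst_letters (relabel_list rho) f)).
  exact: linear_op_comp (deg_part_linear _) (subst_letters_linear _).
under eq_bigr => rho _ do rewrite lin big_distrr.
rewrite exchange_big; apply: eq_bigr => x _; rewrite big_distrr; apply: eq_bigr => rho _ /=.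
by rewrite mulrCA.
Qed.

(* For j < k, B_j is stable: relabelling only touches positions of E, which
   are never special positions of generators of B_j. *)
Lemma alt_relabel_inB j f : (1 <= j)%N -> (j < k)%N -> inB j f -> inB j (alt_relabel f).
Proof.
move=> j_gt0 jk; apply: span_linear_op alt_relabel_linear _ => g g_gen.
apply: span_sum => rho _; apply: span_gen; apply: Bgen_deg_part.
apply: Bgen_subst_letters g_gen => x /mapP [i _ ->] m q qj /=.
exact: E_position_not_special j_gt0 jk (ltn_ord i) qj.
Qed.

(* The special letters of Z_k sit exactly at the positions of E. *)
Lemma letter_Epos (p : 'I_k.+1) s : letter s (3 ^ p * Mj k) = nth 0%N s (Epos p).
Proof. by rewrite /letter EposE. Qed.

Lemma relabel_Epos_neq rho w (p q : 'I_k.+1) : p != q ->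
  nth 0%N (relabel rho w) (Epos p) != nth 0%N (relabel rho w) (Epos q).
Proof.
move=> pq; rewrite !relabel_Epos; apply/eqP => /(cc_inj (leq_ord (rho p)) (leq_ord (rho q))) e.
by move/eqP: pq; apply; apply: (@perm_inj _ rho); apply: val_inj.
Qed.

(* The alternating sum kills s1 + s2 when s2 is s1 with the letters at the
   positions of x_(c_p) and x_(c_q) exchanged: rho and (p q) rho cancel. *)
Lemma alt_sum_swapped_pair (p q : 'I_k.+1) w s1 s2 : p != q -> size w = (Nj k).-1 ->
  size s1 = size s2 ->
  nth 0%N s1 (Epos p) = nth 0%N s2 (Epos q) -> nth 0%N s1 (Epos q) = nth 0%N s2 (Epos p) ->
  (forall r, r != Epos p -> r != Epos q -> nth 0%N s1 r = nth 0%N s2 r) ->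
  \sum_(rho : perm) sgn rho * (mono K s1 (relabel rho w) + mono K s2 (relabel rho w)) = 0.
Proof.
move=> pq w_size s12_size s12_p s12_q s12_off.
have swap rho : (relabel (tperm p q * rho) w == s1) = (relabel rho w == s2).
  apply/eqP/eqP => relabel_s.
    by rewrite -(tpermKg p q rho); apply: (relabel_tperm k_gt0 pq w_size _ _ _ _ relabel_s).
  apply: (relabel_tperm k_gt0 pq w_size _ _ _ _ relabel_s) => //.
  by move=> r rp rq; rewrite s12_off.
have sum1 : \sum_(rho : perm) sgn rho * mono K s1 (relabel rho w) =
            - \sum_(rho : perm) sgn rho * mono K s2 (relabel rho w).
  rewrite (reindex_inj (mulgI (tperm p q))) /= -sumrN; apply: eq_bigr => rho _.
  by rewrite sgn_tperm // /mono swap mulNr.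
by rewrite (eq_bigr _ (fun rho _ => mulrDr _ _ _)) big_split /= sum1 addNr.
Qed.

(* A generator of the first kind has equal letters at two positions
   of E, which no relabelled word of E has; generators of the second kind
   cancel in pairs. *)
Lemma alt_sum_Z (z : elt) w : inZ k z -> size w = (Nj k).-1 ->
  \sum_(rho : perm) sgn rho * z (relabel rho w) = 0.
Proof.
move=> zZ w_size.
case: zZ => [[kap [s [p [q [_ [pqk [s_pq zE]]]]]]]|
    [kap [s1 [s2 [p [q [l1 [l2 [s1_size [s2_size [pqk [_ [s1p [s1q [s2p [s2q [s12 zE]]]]]]]]]]]]]]]]].
- have [pk qk] : (p < k.+1)%N /\ (q < k.+1)%N by lia.
  have pq : Ordinal pk != Ordinal qk by apply/eqP => -[]; lia.
  rewrite big1 // => rho _; rewrite zE /mono; case: eqP => [e|_]; last by rewrite !mulr0.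
  move: s_pq; rewrite (letter_Epos (Ordinal pk)) (letter_Epos (Ordinal qk)) -e => /eqP.
  by rewrite (negbTE (relabel_Epos_neq _ _ pq)).
- have [pk qk] : (p < k.+1)%N /\ (q < k.+1)%N by lia.
  have pq : Ordinal pk != Ordinal qk by apply/eqP => -[]; lia.
  under eq_bigr => rho _ do rewrite zE mulrCA.
  rewrite -big_distrr (alt_sum_swapped_pair pq w_size) ?s1_size ?s2_size //; first exact: mulr0.
  + by rewrite -!letter_Epos s1p s2q.
  + by rewrite -!letter_Epos s1q s2p.
  move=> r rp rq; have := s12 r.+1 isT; rewrite /letter /=; apply.
    by apply/eqP => e; case/eqP: rp; rewrite EposE -e.
  by apply/eqP => e; case/eqP: rq; rewrite EposE -e.
Qed.

(* Hence the operator vanishes on the generators of B_k: on words of E of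
   length N_k - 1, a generator u z v of B_k is a constant times z. *)
Lemma alt_relabel_Bgen_k (g : elt) : Bgen k g -> forall w, alt_relabel g w = 0.
Proof.
move=> [m [u [z [v [u_deg [zZ [_ gE]]]]]]] w.
have z_deg w' : z w' != 0 -> size w' = (Nj k).-1 := inZ_size zZ.
rewrite alt_relabelE; case: ifP => // w_E.
have w_size : size w = (Nj k).-1 by move: w_E; rewrite in_EsigE // => /andP [/eqP].
have g_relabel rho :
    g (relabel rho w) = (if m == 0%N then u [::] * v [::] else 0) * z (relabel rho w).
  rewrite gE (mul3_homogE _ u_deg z_deg) relabel_size // w_size.
  case: (m =P 0%N) => [->|m_ne0].
    rewrite mul0n add0n leqnn take0 drop0 take_oversize ?drop_oversize ?relabel_size ?w_size //.
    by rewrite /= mulrAC.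
  by have := Nj_gt0 k; case: ifP => [|_]; [nia | rewrite mul0r].
under eq_bigr => rho _ do rewrite g_relabel mulrCA.
by rewrite -big_distrr alt_sum_Z //; exact: mulr0.
Qed.

(* Under the hypothesis of the theorem, the operator extracts from a exactly
   the sum of its summands lying in E: the term rho = 1 gives them, and every
   other term would need a summand of a in E^rho. *)
Lemma alt_relabel_extracts_E (a : elt) :
  (forall sig : perm, sig != 1%g -> forall s, a s != 0 -> ~~ in_Esig sig s) ->
  forall w, alt_relabel a w = if in_Esig (1%g : perm) w then a w else 0.
Proof.
move=> a_off w; rewrite alt_relabelE; case: ifP => // w_E.
have w_size : size w = (Nj k).-1 by move: w_E; rewrite in_EsigE // => /andP [/eqP].
rewrite (bigD1 1%g) //= big1 ?addr0 => [|rho rho_ne1].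
  by rewrite /sgn odd_perm1 expr0 mul1r relabel_id // -in_E_match.
case: (a (relabel rho w) =P 0) => [->|/eqP a_ne0]; first by rewrite mulr0.
by have := a_off rho rho_ne1 _ a_ne0; rewrite relabel_in_Esig.
Qed.

End AltRelabel.

Unset Implicit Arguments.
Set Strict Implicit.
Set Printing Implicit Defensive.

Theorem mainTheorem7 (K : fieldType) (k : nat) (a : elt K) :
  (1 <= k)%N ->
  homog ((100 ^ (k ^ 2)).-1) a ->
  inBsum k a ->
  (forall (sig : {perm 'I_k.+1}), sig != 1%g ->
     forall s, a s != 0%R -> ~~ in_Esig sig s) ->
  inBsum (k.-1) (fun w => if in_Esig (1%g : {perm 'I_k.+1}) w then a w else 0%R).
Proof.
move=> k_gt0 _ [bs [bs_B aE]] a_off.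
exists (fun j => alt_relabel k (bs j)); split.
  move=> j /andP [j_gt0 jk]; apply: alt_relabel_inB => //; first by lia.
  by apply: bs_B; lia.
have bk_0 w : alt_relabel k (bs k) w = 0%R.
  apply: (span_linear_op0 (alt_relabel_linear k) (alt_relabel_Bgen_k k_gt0)).
  by apply: bs_B; rewrite k_gt0 leqnn.
move=> w; rewrite -(alt_relabel_extracts_E k_gt0 a_off w).
have -> : a = fun w => (\sum_(1 <= j < k.+1) 1 * bs j w)%R.
  by apply: functional_extensionality => y; rewrite aE; apply: eq_bigr => j _; rewrite mul1r.
rewrite alt_relabel_linear big_nat_recr //= bk_0 mulr0 addr0 (prednK k_gt0).
by under eq_bigr do rewrite mul1r.
Qed.
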